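(* Let $\mathcal A$ be a unital associative algebra over $\mathbb C$, $L\ge0$, and let $A,B,C\in\mathcal A$ satisfy $[A,B]=C$ and $[A,C]=\sum_{i=1}^{L+1}\alpha_iA^i+\delta B+\epsilon+\beta\{A,B\}$. Define numbers $\bar x_{i,j}$ ($j\ge1$, $0\le i\le j-1$) and $\bar y_{i,j}$ ($j\ge1$, $0\le i\le j$) by $\bar x_{0,1}=1$, $\bar y_{0,1}=0$, $\bar y_{1,1}=1$ and, for $j\ge2$, $$\bar x_{i,j}=\bar x_{i-1,j-1}+\beta\bar x_{i,j-1}+\bar y_{i,j-1},\qquad \bar y_{i,j}=\delta\bar x_{i,j-1}+2\beta\bar x_{i-1,j-1}+\bar y_{i-1,j-1},$$ with the conventions $\bar x_{-1,j}=\bar y_{-1,j}=0$ and $\bar x_{j,j}=\bar x_{j+1,j}=0$ for all $j\ge1$. Then for all integers $i>j\ge1$, $$A^iBA^j-A^jBA^i=\sum_{k=0}^{j}\bar y_{k,j}[A^{i+k},B]-\sum_{k=0}^{j-1}\bar x_{k,j}\{A^{i+k},C\}.$$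
   Context: $[X,Y]=XY-YX$, $\{X,Y\}=XY+YX$, $A^0=1$. *)

From HB Require Import structures.
From mathcomp Require Import all_boot all_order all_algebra all_field.
Set Implicit Arguments. Unset Strict Implicit. Unset Printing Implicit Defensive.
Import Order.TTheory GRing.Theory Num.Theory.
Local Open Scope ring_scope.

Definition comm (R : pzRingType) (x y : R) : R := x * y - y * x.
Definition acomm (R : pzRingType) (x y : R) : R := x * y + y * x.

Definition prevc (f : nat -> algC) (i : nat) : algC :=
  match i with 0 => 0 | i'.+1 => f i' end.

(* xy beta delta j = (fun i => xbar_{i,j}, fun i => ybar_{i,j}), for j >= 1.
   Conventions: xbar_{i,j} = 0 for i >= j, ybar_{i,j} = 0 for i > j,
   xbar_{-1,j} = ybar_{-1,j} = 0.  The value at j = 0 is unused. *)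
Fixpoint xy (beta delta : algC) (j : nat) : (nat -> algC) * (nat -> algC) :=
  match j with
  | 0 => (fun _ => 0, fun _ => 0)
  | j1.+1 =>
    match j1 with
    | 0 => (fun i => if i == 0%N then 1 else 0, fun i => if i == 1%N then 1 else 0)
    | _.+1 =>
      let p := xy beta delta j1 in
      (fun i => if (i < j)%N then prevc p.1 i + beta * p.1 i + p.2 i else 0,
       fun i => if (i <= j)%N then delta * p.1 i + 2 * beta * prevc p.1 i + prevc p.2 i
                else 0)
    end
  end.

Definition xbar (beta delta : algC) (i j : nat) : algC := (xy beta delta j).1 i.
Definition ybar (beta delta : algC) (i j : nat) : algC := (xy beta delta j).2 i.

From HB Require Import structures.
From mathcomp Require Import all_boot all_order all_algebra all_field.
From mathcomp Require Import ring zify.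
Import Order.TTheory GRing.Theory Num.Theory.
Local Open Scope ring_scope.

(* Write  T(X;i,j) = A^i X A^j - A^j X A^i  and  P(X;i,j) = A^i X A^j + A^j X A^i
   ("antisymmetric" and "symmetric sandwiches").  Two shift relations drive everything:
     (R1)  T(B;i,j+1) = T(B;i+1,j) - P(C;i,j)                    (as C = [A,B]),
     (R2)  P(C;i,j+1) = P(C;i+1,j) - delta T(B;i,j)
                        - beta (T(B;i+1,j) + T(B;i,j+1)),
   where (R2) comes from applying T(-;i,j) to the relation for [A,C]: the
   polynomial part in A commutes with A, so its sandwich vanishes.
   Inducting on j, T(B;i,j) and P(C;i,j) are simultaneously linear
   combinations of [A^(i+k),B] and {A^(i+k),C} whose coefficient sequences
   obey the recursion of xbar/ybar (started one step earlier, at j = 0). *)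

Section Sandwiches.
Context {R : pzRingType}.
Implicit Types (A X : R) (i j : nat).

Definition sandm A X i j := A ^+ i * X * A ^+ j - A ^+ j * X * A ^+ i.
Definition sandp A X i j := A ^+ i * X * A ^+ j + A ^+ j * X * A ^+ i.

Lemma sandwich_comm A X i j :
  A ^+ i * comm A X * A ^+ j = A ^+ i.+1 * X * A ^+ j - A ^+ i * X * A ^+ j.+1.
Proof. by rewrite mulrBr mulrBl exprSr exprS !mulrA. Qed.

Lemma sandwich_acomm A X i j :
  A ^+ i * acomm A X * A ^+ j = A ^+ i.+1 * X * A ^+ j + A ^+ i * X * A ^+ j.+1.
Proof. by rewrite mulrDr mulrDl exprSr exprS !mulrA. Qed.

Lemma sandm0 A X i : sandm A X i 0 = comm (A ^+ i) X.
Proof. by rewrite /sandm /comm expr0 mulr1 mul1r. Qed.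

Lemma sandp0 A X i : sandp A X i 0 = acomm (A ^+ i) X.
Proof. by rewrite /sandp /acomm expr0 mulr1 mul1r. Qed.

Lemma sandm_shift A X i j :
  sandm A X i j.+1 = sandm A X i.+1 j - sandp A (comm A X) i j.
Proof.
have zmod_id (p q r s : R) : q - r = (p - s) - ((p - q) + (r - s)).
  by rewrite opprD !opprB addrACA (addrC p) subrK addKr.
by rewrite /sandm /sandp !sandwich_comm; apply: zmod_id.
Qed.

Lemma sandmD A X Y i j : sandm A (X + Y) i j = sandm A X i j + sandm A Y i j.
Proof. by rewrite /sandm !mulrDr !mulrDl opprD addrACA. Qed.

Lemma sandm_central A Q : GRing.comm Q A -> forall i j, sandm A Q i j = 0.
Proof.
move=> cQA i j; rewrite /sandm -!mulrA (commrX j cQA) (commrX i cQA) !mulrA -!exprD.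
by rewrite addnC subrr.
Qed.

Lemma sandm_acomm A X i j :
  sandm A (acomm A X) i j = sandm A X i.+1 j + sandm A X i j.+1.
Proof. by rewrite /sandm !sandwich_acomm opprD (addrC (- _)) addrACA. Qed.

Lemma sandm_comm A X i j :
  sandm A (comm A X) i j = sandp A X i.+1 j - sandp A X i j.+1.
Proof. by rewrite /sandm /sandp !sandwich_comm opprB opprD addrACA. Qed.

End Sandwiches.

Lemma sandmZ {K : pzRingType} {W : algType K} (A X : W) (c : K) i j :
  sandm A (c *: X) i j = c *: sandm A X i j.
Proof. by rewrite /sandm -!scalerAr -!scalerAl scalerBr. Qed.

Lemma sandp_shift {K : pzRingType} {W : algType K} {A B C Q : W} {beta delta : K} :
  GRing.comm Q A -> comm A C = Q + delta *: B + beta *: acomm A B ->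
  forall i j, sandp A C i j.+1 = sandp A C i.+1 j - delta *: sandm A B i j
                                 - beta *: (sandm A B i.+1 j + sandm A B i j.+1).
Proof.
move=> cQA hC i j.
have := sandm_comm A C i j.
rewrite hC !sandmD (sandm_central _ _ cQA) !sandmZ sandm_acomm add0r => h.
by rewrite -addrA -opprD h opprB addrC subrK.
Qed.

(* Coefficient sequences, indexed from j = 0: xcoef j k, ycoef j k are the
   coefficients of -{A^(i+k),C} and [A^(i+k),B] in T(B;i,j).  For j >= 1
   they coincide with xbar/ybar, but T(B;i,0) = [A^i,B] gives the simpler
   start xcoef 0 = 0, ycoef 0 = indicator of 0. *)
Fixpoint coefs (beta delta : algC) (j : nat) : (nat -> algC) * (nat -> algC) :=
  match j with
  | 0 => (fun _ => 0, fun k => if k == 0%N then 1 else 0)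
  | j'.+1 => let p := coefs beta delta j' in
     (fun k => prevc p.1 k + beta * p.1 k + p.2 k,
      fun k => delta * p.1 k + 2 * beta * prevc p.1 k + prevc p.2 k)
  end.
Definition xcoef beta delta j := (coefs beta delta j).1.
Definition ycoef beta delta j := (coefs beta delta j).2.
Arguments xcoef : simpl never.
Arguments ycoef : simpl never.

(* Coefficients of [A^(i+k),B] and {A^(i+k),C} in P(C;i,j). *)
Definition ucoef beta delta j k :=
  - (delta * xcoef beta delta j k + 2 * beta * prevc (xcoef beta delta j) k).
Definition vcoef beta delta j k := beta * xcoef beta delta j k + ycoef beta delta j k.

Section Coefficients.
Variables beta delta : algC.
Local Notation X := (xcoef beta delta).
Local Notation Y := (ycoef beta delta).

Lemma xcoef0 k : X 0 k = 0.
Proof. by []. Qed.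

Lemma ycoef0 k : Y 0 k = if k == 0%N then 1 else 0.
Proof. by []. Qed.

Lemma xcoefS j k : X j.+1 k = prevc (X j) k + beta * X j k + Y j k.
Proof. by []. Qed.

Lemma ycoefS j k : Y j.+1 k = delta * X j k + 2 * beta * prevc (X j) k + prevc (Y j) k.
Proof. by []. Qed.

Lemma coef_vanish j k : ((j <= k)%N -> X j k = 0) /\ ((j < k)%N -> Y j k = 0).
Proof.
elim: j k => [|j IH] [|k] //; rewrite xcoefS ycoefS /=.
have [Xk Yk] := IH k; have [XSk YSk] := IH k.+1.
split=> hjk.
- by rewrite Xk // XSk ?YSk // ?mulr0 ?addr0 // ltnW.
- by rewrite XSk ?Yk ?Xk ?mulr0 ?addr0 //; lia.
Qed.

Lemma prevc_ext {f g : nat -> algC} : f =1 g -> prevc f =1 prevc g.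
Proof. by move=> efg [|k] //=; rewrite efg. Qed.

Lemma bar_coef j k :
  xbar beta delta k j.+1 = X j.+1 k /\ ybar beta delta k j.+1 = Y j.+1 k.
Proof.
elim: j k => [|j IH] k.
  rewrite /xbar /ybar xcoefS ycoefS /=.
  by case: k => [|[|k]] /=; split; rewrite ?mulr0 ?addr0 ?add0r.
rewrite /xbar /ybar /=.
have eX : (xy beta delta j.+1).1 =1 X j.+1 by move=> i; case: (IH i).
have eY : (xy beta delta j.+1).2 =1 Y j.+1 by move=> i; case: (IH i).
split; case: ifP => hk.
- by rewrite xcoefS eX eY (prevc_ext eX).
- by rewrite (proj1 (coef_vanish j.+2 k)) // leqNgt hk.
- by rewrite ycoefS eX (prevc_ext eX) (prevc_ext eY).
- by rewrite (proj2 (coef_vanish j.+2 k)) // ltnNge hk.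
Qed.

End Coefficients.

Section Combinations.
Context {W : lmodType algC} (G H : nat -> W).

Definition lincomb (N i : nat) (a b : nat -> algC) : W :=
  \sum_(0 <= k < N) (a k *: G (i + k)%N + b k *: H (i + k)%N).

Lemma lincombD N i a b a' b' :
  lincomb N i a b + lincomb N i a' b' =
  lincomb N i (fun k => a k + a' k) (fun k => b k + b' k).
Proof. rewrite /lincomb -big_split; apply: eq_bigr => k _; by rewrite !scalerDl addrACA. Qed.

Lemma lincombZ N i a b c :
  c *: lincomb N i a b = lincomb N i (fun k => c * a k) (fun k => c * b k).
Proof. rewrite /lincomb scaler_sumr; apply: eq_bigr => k _; by rewrite scalerDr !scalerA. Qed.

Lemma lincombN N i a b :
  - lincomb N i a b = lincomb N i (fun k => - a k) (fun k => - b k).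
Proof. rewrite /lincomb -sumrN; apply: eq_bigr => k _; by rewrite opprD !scaleNr. Qed.

Lemma eq_lincomb N i a b a' b' :
  a =1 a' -> b =1 b' -> lincomb N i a b = lincomb N i a' b'.
Proof. move=> ea eb; rewrite /lincomb; apply: eq_bigr => k _; by rewrite ea eb. Qed.

Lemma lincomb_prevc N i a b :
  lincomb N.+1 i (prevc a) (prevc b) = lincomb N i.+1 a b.
Proof.
rewrite /lincomb big_nat_recl //= !scale0r !add0r; apply: eq_bigr => k _.
by rewrite addSnnS.
Qed.

End Combinations.

(* The simultaneous expansion of T(B;i,j) and P(C;i,j), stated for every
   number N > j of terms: letting N vary makes the shift i -> i+1 exact
   (lincomb_prevc), so the induction never needs to know where the
   coefficients vanish. *)
Section Expansion.
Context {W : algType algC} {A B C Q : W} {beta delta : algC}.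
Hypothesis CAB : comm A B = C.
Hypothesis cQA : GRing.comm Q A.
Hypothesis ACrel : comm A C = Q + delta *: B + beta *: acomm A B.

Local Notation comb :=
  (lincomb (fun k => comm (A ^+ k) B) (fun k => acomm (A ^+ k) C)).
Local Notation X := (xcoef beta delta).
Local Notation Y := (ycoef beta delta).
Local Notation U := (ucoef beta delta).
Local Notation V := (vcoef beta delta).

Definition expands j := forall N i, (j < N)%N ->
  sandm A B i j = comb N i (Y j) (fun k => - X j k) /\
  sandp A C i j = comb N i (U j) (V j).

Lemma expands0 : expands 0.
Proof.
move=> [|N] i // _; rewrite sandm0 sandp0 /lincomb /ucoef /vcoef.
by split; rewrite big_nat_recl // big1 => [|k _];
  rewrite /= ?xcoef0 ?ycoef0 /= ?(mulr0, oppr0, scale0r, scale1r, add0r, addr0, addn0).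
Qed.

Lemma expandsS j : expands j -> expands j.+1.
Proof.
move=> IH [|N] i // ltjN.
have [TS PS] := IH N i.+1 ltjN.
have [T0 P0] := IH N.+1 i (ltnW ltjN).
have TjS : sandm A B i j.+1 = comb N.+1 i (Y j.+1) (fun k => - X j.+1 k).
  rewrite sandm_shift CAB TS P0 -lincomb_prevc lincombN lincombD.
  by apply: eq_lincomb => -[|[|k]]; rewrite /ucoef /vcoef /= ?xcoefS ?ycoefS /=; ring.
split=> //.
rewrite (sandp_shift cQA ACrel) TjS TS PS T0 -!lincomb_prevc.
rewrite lincombD !lincombZ !lincombN !lincombD.
by apply: eq_lincomb => -[|[|k]]; rewrite /ucoef /vcoef /= ?xcoefS ?ycoefS /=; ring.
Qed.

Lemma expansion j : expands j.
Proof. by elim: j => [|j IH]; [exact: expands0 | exact: expandsS]. Qed.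

End Expansion.

Theorem lemma4 (V : algType algC) (L : nat) (alpha : nat -> algC)
    (beta delta eps : algC) (A B C : V) :
  comm A B = C ->
  comm A C = \sum_(1 <= i < L.+2) alpha i *: A ^+ i + delta *: B + eps%:A
             + beta *: acomm A B ->
  forall i j : nat, (1 <= j)%N -> (j < i)%N ->
  A ^+ i * B * A ^+ j - A ^+ j * B * A ^+ i =
    \sum_(0 <= k < j.+1) ybar beta delta k j *: comm (A ^+ (i + k)) B
    - \sum_(0 <= k < j) xbar beta delta k j *: acomm (A ^+ (i + k)) C.
Proof.
move=> CAB hC i [//|j] _ _.
pose Q := \sum_(1 <= k < L.+2) alpha k *: A ^+ k + eps%:A.
have cQA : GRing.comm Q A.
  apply/commr_sym/commrD; last exact/commr_sym/comm_alg.
  apply: commr_sum => k _.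
  by rewrite /GRing.comm -scalerAl -scalerAr -exprS -exprSr.
have ACrel : comm A C = Q + delta *: B + beta *: acomm A B.
  by rewrite hC /Q; congr (_ + _); rewrite addrAC.
have [expT _] := expansion CAB cQA ACrel j.+1 j.+2 i (ltnSn _).
rewrite -[LHS]/(sandm A B i j.+1) expT /lincomb big_split /=.
congr (_ + _).
  by apply: eq_bigr => k _; rewrite (proj2 (bar_coef beta delta j k)).
rewrite big_nat_recr //= (proj1 (coef_vanish _ _ j.+1 j.+1)) // oppr0 scale0r addr0.
by rewrite -sumrN; apply: eq_bigr => k _; rewrite (proj1 (bar_coef beta delta j k)) scaleNr.
Qed.
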